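(* Let $f:[0,\infty)\to[0,\infty)$ be convex with $f(1)=f'(1)=0$, and suppose there exists $c>1$ such that $\frac{f(M)}{M^2}\le\frac{f(t)}{t^2}$ for all $M\ge t\ge c$. Then for any probability measures $\mu,\nu$ on a measurable space $\mathcal X$ with $\nu\ll\mu$ and any $M\ge c$ with $f(M)>0$, $$\frac{\mathrm{ICov}_M(\nu\|\mu)}{M}\le\frac{c^2}{M}+\frac{M\cdot D_f(\nu\|\mu)}{f(M)}.$$
   Context: $\mathrm{Cov}_t(\nu\|\mu)=\nu(\{x:\frac{d\nu}{d\mu}(x)\ge t\})$, $\mathrm{ICov}_M(\nu\|\mu)=\int_0^M\mathrm{Cov}_t(\nu\|\mu)\,dt$, and $D_f(\nu\|\mu)=\mathbb E_{X\sim\mu}[f(\frac{d\nu}{d\mu}(X))]$. *)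

From HB Require Import structures.
From mathcomp Require Import all_boot all_order all_algebra.
From mathcomp Require Import all_classical all_reals all_analysis.
Set Implicit Arguments. Unset Strict Implicit. Unset Printing Implicit Defensive.
Import Order.TTheory GRing.Theory Num.Theory.
Local Open Scope classical_set_scope.
Local Open Scope ring_scope.
Local Open Scope ereal_scope.

(* Radon-Nikodym derivative dnu/dmu (library notion, extended-real valued,
   finite everywhere when nu << mu). *)
Definition rnd d (T : measurableType d) (R : realType)
  (nu mu : probability T R) : T -> \bar R :=
  Radon_Nikodym (charge_of_finite_measure nu) mu.

Definition Cov d (T : measurableType d) (R : realType)
  (nu mu : probability T R) (t : R) : \bar R :=
  nu [set x | t%:E <= rnd nu mu x].

Definition ICov d (T : measurableType d) (R : realType)
  (nu mu : probability T R) (M : R) : \bar R :=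
  \int[lebesgue_measure]_(t in `[0%R, M]) Cov nu mu t.

Definition Df d (T : measurableType d) (R : realType) (f : R -> R)
  (nu mu : probability T R) : \bar R :=
  \int[mu]_x (f (fine (rnd nu mu x)))%:E.

From HB Require Import structures.
From mathcomp Require Import all_boot all_order all_algebra.
From mathcomp Require Import all_classical all_reals all_analysis.
From mathcomp Require Import ring lra measurable_realfun.

Set Implicit Arguments.
Unset Strict Implicit.
Unset Printing Implicit Defensive.
Import Order.TTheory GRing.Theory Num.Theory.
Local Open Scope classical_set_scope.
Local Open Scope ring_scope.

(* Write r for dnu/dmu, which is nonnegative mu-a.e., and h for r clamped to
   [0, M]. The layer-cake formula gives ICov_M(nu||mu) <= E_nu[h] = E_mu[h r].
   Pointwise h(u) u <= c^2 + (M^2 / f M) f(u) for u >= 0: trivially for u <= c,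
   for c <= u <= M because f(t)/t^2 is nonincreasing on [c, oo), and for u >= M
   because convexity and f(1) = 0 make f(t)/t nondecreasing on [1, oo).
   Integrating against mu and dividing by M gives the bound. *)

Section clamp.
Variable R : realDomainType.
Implicit Types M t u : R.

Definition clamp M u := Num.min (Num.max u 0) M.

Lemma clamp_ge0 M u : 0 <= M -> 0 <= clamp M u.
Proof. by move=> M0; rewrite le_min le_max lexx orbT. Qed.

Lemma clamp_le M u : clamp M u <= M.
Proof. by rewrite ge_min lexx orbT. Qed.

Lemma le_clamp M u t : t <= u -> t <= M -> t <= clamp M u.
Proof. by move=> tu tM; rewrite le_min le_max tu. Qed.

Lemma ge0_clampE M u : 0 <= u -> clamp M u = Num.min u M.
Proof. by move=> u0; rewrite /clamp (max_idPl u0). Qed.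

Lemma lt0_clampE M u : 0 <= M -> u < 0 -> clamp M u = 0.
Proof. by move=> M0 u0; rewrite /clamp (max_idPr (ltW u0)) (min_idPl M0). Qed.

Lemma clamp_mul_ge0 M u : 0 <= M -> 0 <= clamp M u * u.
Proof.
move=> M0; have [u0|u0] := leP 0 u; last by rewrite lt0_clampE ?mul0r.
by rewrite mulr_ge0 ?clamp_ge0.
Qed.

End clamp.

Lemma measurable_clamp d (T : measurableType d) (R : realType) (M : R)
    (X : T -> R) :
  measurable_fun setT X -> measurable_fun setT (fun x => clamp M (X x)).
Proof. by move=> mX; apply: measurable_minr => //; apply: measurable_maxr. Qed.

Section convex_ratio.
Variables (R : realType) (f : R -> R).
Hypothesis f_ge0 : forall x : R, 0 <= x -> 0 <= f x.
Hypothesis f_convex : forall x y l : R, 0 <= x -> 0 <= y -> 0 <= l -> l <= 1 ->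
  f (l * x + (1 - l) * y) <= l * f x + (1 - l) * f y.
Hypothesis f1 : f 1 = 0.

Lemma convex_le_div (x y : R) : 1 <= x -> x <= y -> f x / x <= f y / y.
Proof.
move=> x1 xy; have [->|neq_xy] := eqVneq x y; first exact: lexx.
have {xy neq_xy} xy : x < y by rewrite lt_neqAle neq_xy xy.
have x0 : 0 < x by lra.
have y0 : 0 < y by lra.
have y1 : 0 < y - 1 by lra.
pose l := (x - 1) / (y - 1).
have l0 : 0 <= l by rewrite divr_ge0 //; lra.
have l1 : l <= 1 by rewrite ler_pdivrMr //; lra.
have fx_le : f x <= l * f y.
  have := f_convex (ltW y0) ler01 l0 l1.
  by rewrite (_ : l * y + _ = x) ?f1 ?mulr0 ?addr0 // /l; field; lra.
have fy0 : 0 <= f y by apply: f_ge0; exact: ltW.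
rewrite ler_pdivrMr // mulrAC ler_pdivlMr //.
apply: (le_trans (ler_wpM2r (ltW y0) fx_le)).
rewrite mulrAC [leRHS]mulrC ler_wpM2r // /l mulrAC ler_pdivrMr //.
nra.
Qed.

Variable c : R.
Hypothesis c_gt1 : 1 < c.
Hypothesis fdiv_sqr_nonincreasing :
  forall M t : R, c <= t -> t <= M -> f M / M ^+ 2 <= f t / t ^+ 2.

Lemma mul_min_le (M u : R) : c <= M -> 0 < f M -> 0 <= u ->
  Num.min u M * u <= c ^+ 2 + M ^+ 2 / f M * f u.
Proof.
move=> cM fM0 u0.
have M1 : 1 < M := lt_le_trans c_gt1 cM.
have M0 : 0 < M := lt_trans ltr01 M1.
have [uc|cu] := leP u c.
  apply: ler_wpDr; first by rewrite mulr_ge0 ?divr_ge0 ?sqr_ge0 ?(ltW fM0) ?f_ge0.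
  by rewrite expr2 ler_pM // ?le_min ?u0 ?(ltW M0) // ge_min uc.
apply: ler_wpDl; first exact: sqr_ge0.
have u_gt0 : 0 < u := le_lt_trans (ltW (lt_trans ltr01 c_gt1)) cu.
rewrite mulrAC ler_pdivlMr //.
have [uM|Mu] := leP u M.
  have := fdiv_sqr_nonincreasing (ltW cu) uM.
  rewrite ler_pdivrMr ?exprn_gt0 // mulrAC ler_pdivlMr ?exprn_gt0 // => fM_u.
  by rewrite -expr2 mulrC [leRHS]mulrC.
have := convex_le_div (ltW M1) (ltW Mu).
rewrite ler_pdivrMr // mulrAC ler_pdivlMr // => fM_u.
by rewrite expr2 -!mulrA ler_wpM2l ?(ltW M0) // mulrC [leRHS]mulrC.
Qed.

Lemma clamp_mul_le (M u : R) : c <= M -> 0 < f M ->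
  clamp M u * u <= c ^+ 2 + M ^+ 2 / f M * Num.max (f u) 0.
Proof.
move=> cM fM0; have M0 : 0 <= M := le_trans (ltW (lt_trans ltr01 c_gt1)) cM.
have K0 : 0 <= M ^+ 2 / f M by rewrite divr_ge0 ?sqr_ge0 ?ltW.
have [u0|u0] := leP 0 u.
  rewrite ge0_clampE //; apply: le_trans (mul_min_le cM fM0 u0) _.
  by rewrite lerD2l ler_wpM2l // le_max lexx.
rewrite lt0_clampE // mul0r addr_ge0 ?sqr_ge0 //.
by rewrite mulr_ge0 // le_max lexx orbT.
Qed.

End convex_ratio.

(* f is not assumed measurable, hence neither is the integrand of D_f: the
   first two lemmas below need no measurability hypothesis. *)
Section nonneg_integral.
Local Open Scope ereal_scope.
Context d (T : measurableType d) (R : realType).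

Lemma ge0_le_integralT (mu : {measure set T -> \bar R}) (f1 f2 : T -> \bar R) :
  (forall x, 0 <= f1 x) -> (forall x, f1 x <= f2 x) ->
  \int[mu]_x f1 x <= \int[mu]_x f2 x.
Proof.
move=> f10 f12; rewrite !ge0_integralTE // => [|x]; last exact: le_trans (f12 x).
apply: ereal_sup_le => _ [h hf <-]; exists h => //= x.
exact: le_trans (hf x) (f12 x).
Qed.

Lemma ae_ge0_integralE (mu : {measure set T -> \bar R}) (g : T -> \bar R) :
  {ae mu, forall x, 0 <= g x} -> \int[mu]_x g x = \int[mu]_x g^\+ x.
Proof.
move=> [N [mN N0 gN]]; rewrite integralE.
suff -> : \int[mu]_x g^\- x = 0 by rewrite sube0.
apply/eqP; rewrite eq_le integral_ge0 ?andbT => [|x _]; last exact: funeneg_ge0.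
apply: (@le_trans _ _ (\int[mu]_x (+oo * (\1_N x)%:E))).
  apply: ge0_le_integralT => x; first exact: funeneg_ge0.
  have [Nx|Nx] := pselect (N x); first by rewrite indicE mem_set // mule1 leey.
  have gx0 : 0 <= g x by apply: contrapT => /gN.
  by rewrite indicE memNset // mule0 funenegE (max_idPr _) // oppe_le0.
rewrite ge0_integralZl //; last exact/measurable_EFinP/measurable_indic.
by rewrite integral_indic // setIT N0 mule0.
Qed.

Lemma Radon_Nikodym_ge0_ae (nu : {finite_measure set T -> \bar R})
    (mu : {sigma_finite_measure set T -> \bar R}) : nu `<< mu ->
  {ae mu, forall x, 0 <= Radon_Nikodym (charge_of_finite_measure nu) mu x}.
Proof.
move=> numu; apply: filterS (ae_eq_Radon_Nikodym_SigmaFinite numu measurableT).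
by move=> x /(_ I) <-; exact: Radon_Nikodym_SigmaFinite.f_ge0.
Qed.

End nonneg_integral.

Section probability_integral_bounds.
Context d (T : measurableType d) (R : realType) (P : probability T R).

Lemma integral_cst_probability (a : R) : (\int[P]_x a%:E = a%:E)%E.
Proof.
rewrite (integral_cst P measurableT a%:E).
by rewrite [X in (_ * X)%E](_ : _ = 1%E) ?mule1 //; exact: probability_setT.
Qed.

Lemma layer_cake_le (X : T -> R) (M : R) : measurable_fun setT X -> 0 <= M ->
  (\int[lebesgue_measure]_(t in `[0%R, M]) P [set x | (t <= X x)%R] <=
   \int[P]_x (clamp M (X x))%:E)%E.
Proof.
move=> mX M0; pose Y x := clamp M (X x).
have mY : measurable_fun setT Y := measurable_clamp M mX.
have Y0 x : 0 <= Y x := clamp_ge0 (X x) M0.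
(* ccdf is defined with a strict inequality, hence the slack e. *)
apply/lee_addgt0Pr => e e0.
have mYe : (fun x => Y x + e) \in mfun.
  by rewrite inE; apply: measurable_funD.
pose Z : {RV P >-> R} := mfun_Sub mYe.
have ZE x : Z x = Y x + e by [].
have Z0 x : 0 <= Z x by rewrite ZE addr_ge0 // ltW.
have -> : (\int[P]_x (Y x)%:E + e%:E = 'E_P[Z])%E.
  rewrite expectation_def -(integral_cst_probability e).
  rewrite -ge0_integralD // => [x _||x _]; rewrite ?lee_fin ?(ltW e0) //.
  exact/measurable_EFinP.
rewrite ge0_expectation_ccdf // integral_mkcond [leRHS]integral_mkcond.
apply: ge0_le_integralT => t; rewrite !patchE.
  by case: ifP => // _; exact: measure_ge0.
case: ifPn => [|_]; last by case: ifP => // _; exact: measure_ge0.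
rewrite inE /= in_itv /= => /andP[t0 tM].
rewrite ifT; last by rewrite inE /= in_itv /= t0.
apply: le_measure; rewrite ?inE.
- by rewrite -[X in measurable X]setTI; exact: measurable_fun_le.
- exact: measurable_funPTI.
- move=> x /= tX; rewrite in_itv /= andbT.
  have : t <= Y x := le_clamp tX tM.
  lra.
Qed.

Lemma le_integral_cst_addZ (u v : T -> R) (a k : R) :
  measurable_fun setT u -> 0 <= a -> 0 < k ->
  (forall x, 0 <= u x) -> (forall x, 0 <= v x) ->
  (forall x, u x <= a + k * v x) ->
  (\int[P]_x (u x)%:E <= a%:E + k%:E * \int[P]_x (v x)%:E)%E.
Proof.
move=> meas_u a0 k0 u0 v0 uv.
(* v need not be measurable: go through its measurable minorant w. *)
pose w x := Num.max (u x - a) 0 / k.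
have mw : measurable_fun setT w.
  apply: measurable_funM => //; apply: measurable_maxr => //.
  exact: measurable_funB.
have w0 x : 0 <= w x by rewrite divr_ge0 ?le_max ?lexx ?orbT ?(ltW k0).
have u_le x : u x <= a + k * w x.
  rewrite /w mulrC divfK ?gt_eqF //.
  have : u x - a <= Num.max (u x - a) 0 by rewrite le_max lexx.
  lra.
apply: (@le_trans _ _ (\int[P]_x (a + k * w x)%:E)%E).
  apply: ge0_le_integral => //.
  - by move=> x _; rewrite lee_fin.
  - exact/measurable_EFinP.
  - apply/measurable_EFinP; apply: measurable_funD => //.
    exact: measurable_funM.
  - by move=> x _; rewrite lee_fin.
under eq_integral do rewrite EFinD EFinM.
rewrite ge0_integralD //; last 2 first.
- by move=> x _; rewrite -EFinM lee_fin mulr_ge0 ?(ltW k0).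
- by under eq_fun do rewrite -EFinM; apply/measurable_EFinP; exact: measurable_funM.
rewrite integral_cst_probability ge0_integralZl_EFin ?(ltW k0) //; last 2 first.
- by move=> x _; rewrite lee_fin.
- exact/measurable_EFinP.
rewrite leeD2l // lee_wpmul2l ?lee_fin ?(ltW k0) //.
apply: ge0_le_integralT => x; rewrite lee_fin //.
by rewrite /w ler_pdivrMr // ge_max mulrC mulr_ge0 ?(ltW k0) // andbT lerBlDl uv.
Qed.

End probability_integral_bounds.

Section real_Radon_Nikodym.
Context d (T : measurableType d) (R : realType) (nu mu : probability T R).
Hypothesis numu : nu `<< mu.
Let numu' : charge_of_finite_measure nu `<< mu := numu.

Definition rndr x := fine (rnd nu mu x).

Lemma rndE x : rnd nu mu x = (rndr x)%:E.
Proof. by rewrite fineK // Radon_Nikodym_fin_num. Qed.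

Lemma measurable_rndr : measurable_fun setT rndr.
Proof.
apply: measurableT_comp (fine_measurable measurableT) _.
exact: measurable_int (Radon_Nikodym_integrable numu').
Qed.

Lemma ICov_le_integral (M : R) : 0 <= M ->
  (ICov nu mu M <= \int[nu]_x (clamp M (rndr x))%:E)%E.
Proof.
move=> M0; rewrite /ICov /Cov; under eq_integral => t _.
  rewrite (_ : [set x | _] = [set x | t <= rndr x]); last first.
    by apply/seteqP; split => x /=; rewrite rndE lee_fin.
  over.
exact: layer_cake_le measurable_rndr M0.
Qed.

Lemma integral_rndr (g : T -> R) (B : R) :
  measurable_fun setT g -> (forall x, `|g x| <= B) ->
  (\int[nu]_x (g x)%:E = \int[mu]_x (g x * rndr x)%:E)%E.
Proof.
move=> mg gB.
rewrite -(Radon_Nikodym_change_of_variables numu measurableT).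
  by apply: eq_integral => x _; rewrite -/(rnd nu mu x) rndE EFinM.
apply: (@le_integrable _ _ _ nu _ measurableT _ (EFin \o cst B)).
- exact/measurable_EFinP.
- by move=> x _ /=; rewrite lee_fin (le_trans (gB x)) // ler_norm.
- exact: finite_measure_integrable_cst.
Qed.

Lemma DfE (f : R -> R) : (forall x, 0 <= x -> 0 <= f x) ->
  Df f nu mu = (\int[mu]_x (Num.max (f (rndr x)) 0)%:E)%E.
Proof.
move=> f_ge0; rewrite /Df ae_ge0_integralE.
  by apply: eq_integral => x _; rewrite funeposE EFin_max.
apply: filterS (Radon_Nikodym_ge0_ae numu) => x rnd0.
by rewrite lee_fin f_ge0 // fine_ge0.
Qed.

End real_Radon_Nikodym.

Theorem lemma24 (R : realType) (f : R -> R) (c : R)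
  (f_ge0 : forall x : R, 0 <= x -> 0 <= f x)
  (f_convex : forall (x y l : R), 0 <= x -> 0 <= y -> 0 <= l -> l <= 1 ->
     f (l * x + (1 - l) * y) <= l * f x + (1 - l) * f y)
  (f1 : f 1 = 0)
  (f'1 : is_derive (1 : R) (1 : R) f (0 : R))
  (c_gt1 : 1 < c)
  (hc : forall M t : R, c <= t -> t <= M -> f M / M ^+ 2 <= f t / t ^+ 2)
  (d : measure_display) (T : measurableType d) (nu mu : probability T R)
  (numu : nu `<< mu) (M : R) (cM : c <= M) (fM : 0 < f M) :
  (ICov nu mu M * (M^-1)%:E <= (c ^+ 2 / M)%:E + (M / f M)%:E * Df f nu mu)%E.
Proof.
have M0 : 0 < M := lt_le_trans (lt_trans ltr01 c_gt1) cM.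
have mr := measurable_rndr numu.
pose K := M ^+ 2 / f M.
have ICov_bound : (ICov nu mu M <= (c ^+ 2)%:E + K%:E * Df f nu mu)%E.
  rewrite (le_trans (ICov_le_integral numu (ltW M0))) //.
  rewrite (integral_rndr numu (B := M)) ?DfE //; last first.
  - by move=> x; rewrite ger0_norm ?clamp_le ?clamp_ge0 ?ltW.
  - exact: measurable_clamp.
  apply: le_integral_cst_addZ => [|||x|x|x].
  - exact: measurable_funM (measurable_clamp M mr) mr.
  - exact: sqr_ge0.
  - by rewrite divr_gt0 // exprn_gt0.
  - exact/clamp_mul_ge0/ltW.
  - by rewrite le_max lexx orbT.
  - exact (clamp_mul_le f_ge0 f_convex f1 c_gt1 hc (rndr nu mu x) cM fM).
have Minv_ge0 : (0 <= (M^-1)%:E)%E by rewrite lee_fin invr_ge0 ltW.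
apply: le_trans (lee_wpmul2r Minv_ge0 ICov_bound) _.
rewrite muleDl // -EFinM muleAC -EFinM.
suff -> : K / M = M / f M by [].
by rewrite /K mulrAC expr2 mulfK ?gt_eqF.
Qed.
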